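(* Let $R$ be a unital regular $K$-algebra, $J$ an ideal of $R$, and $T$ a matricial subalgebra of $R$ such that $R = T \oplus J$ as $K$-vector spaces. Then for every finite subset $Y \subseteq J$ there is an idempotent $e \in J$ such that $Y \subseteq eJe$ and $et = te$ for all $t \in T$.
   Context: $K$ is a field. All algebras are associative $K$-algebras; ideals are two-sided ring ideals that are $K$-subspaces. A ring is regular if for every $x$ there is $y$ with $xyx=x$. A $K$-algebra is matricial if it is isomorphic to $\prod_{i=1}^k M_{n_i}(K)$ for some positive integers $n_1,\dots,n_k$. The subalgebra $T$ need not share the identity of $R$. *)

From mathcomp Require Import all_boot all_algebra.
Set Implicit Arguments. Unset Strict Implicit. Unset Printing Implicit Defensive.
Import GRing.Theory.
Local Open Scope ring_scope.

Definition regular_ring (R : pzRingType) : Prop :=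
  forall x : R, exists y : R, x * y * x = x.

Definition is_ideal (K : fieldType) (R : algType K) (J : {pred R}) : Prop :=
  [/\ 0 \in J,
      (forall x y, x \in J -> y \in J -> x + y \in J),
      (forall (a : K) x, x \in J -> a *: x \in J) &
      (forall r x, x \in J -> r * x \in J /\ x * r \in J)].

(* T is a matricial subalgebra of R (not necessarily containing 1_R):
   T is the image of an injective (non-unital) K-algebra homomorphism
   f : prod_{i<k} M_{n_i}(K) -> R, with all n_i positive. *)
Definition matricial_subalgebra (K : fieldType) (R : algType K) (T : {pred R})
  : Prop :=
  exists (k : nat) (n : 'I_k -> nat)
         (f : (forall i : 'I_k, 'M[K]_(n i)) -> R),
    (forall i, (0 < n i)%N) /\
    (forall A B, f (fun i => A i + B i) = f A + f B) /\
    (forall (a : K) A, f (fun i => a *: A i) = a *: f A) /\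
    (forall A B, f (fun i => A i *m B i) = f A * f B) /\
    (forall A B, f A = f B -> forall i, A i = B i) /\
    (forall r, r \in T <-> exists A, f A = r).

Definition direct_sum_decomp (K : fieldType) (R : algType K) (T J : {pred R})
  : Prop :=
  (forall r : R, exists t, exists j, [/\ t \in T, j \in J & r = t + j]) /\
  (forall x : R, x \in T -> x \in J -> x = 0).

From mathcomp Require Import all_boot all_algebra.
From Stdlib Require Import FunctionalExtensionality.
Set Implicit Arguments. Unset Strict Implicit. Unset Printing Implicit Defensive.
Import GRing.Theory.
Local Open Scope ring_scope.

(* Write T as the image of f : prod_l M_(n_l)(K) -> R, with matrix units
   u^l_ij = f(E^l_ij) and p = sum_(l,i) u^l_ii.  Regularity yields local units:
   for an idempotent P and finitely many x in J with P x = x (resp. x P = x)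
   there is an idempotent g of J in P R P with g x = x (resp. x g = x).  Take
   such a c_l in the corner of u^l_00 for the elements u^l_0a y and y u^l_a0,
   and such a c_0 in the corner of 1 - p for the elements (1 - p) y and
   y (1 - p), with y in Y.  Then e = c_0 + sum_(l,a) u^l_a0 c_l u^l_0a, that
   is c_0 (+) (+)_l (c_l (x) 1_(n_l)), is an idempotent of J commuting with
   all matrix units, hence with T, and e y = y = y e for y in Y. *)

Definition ring_ideal (R : pzRingType) (J : {pred R}) : Prop :=
  [/\ 0 \in J, (forall x y, x \in J -> y \in J -> x - y \in J) &
      (forall r x, x \in J -> r * x \in J /\ x * r \in J)].

Definition corner_idem (R : pzRingType) (J : {pred R}) (P g : R) : Prop :=
  [/\ g \in J, g * g = g, P * g = g & g * P = g].

Lemma regular_ring_c (R : pzRingType) : regular_ring R -> regular_ring R^c.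
Proof. by move=> regR x; have [y xyx] := regR x; exists y; rewrite -mulrA. Qed.

Lemma ring_ideal_c (R : pzRingType) (J : {pred R}) :
  ring_ideal J -> ring_ideal (J : {pred R^c}).
Proof. by case=> J0 JB JM; split=> // r x /(JM r) []. Qed.

Section Ideal.
Variables (R : pzRingType) (J : {pred R}).
Hypothesis idealJ : ring_ideal J.

Lemma ring_ideal0 : 0 \in J. Proof. by case: idealJ. Qed.

Lemma ring_idealB x y : x \in J -> y \in J -> x - y \in J.
Proof. by case: idealJ => _ JB _; exact: JB. Qed.

Lemma ring_idealMl r x : x \in J -> r * x \in J.
Proof. by case: idealJ => _ _ JM /(JM r) []. Qed.

Lemma ring_idealMr r x : x \in J -> x * r \in J.
Proof. by case: idealJ => _ _ JM /(JM r) []. Qed.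

Lemma ring_idealD x y : x \in J -> y \in J -> x + y \in J.
Proof.
move=> xJ yJ; have -> : x + y = x - (0 - y) by rewrite sub0r opprK.
by rewrite ring_idealB // ring_idealB // ring_ideal0.
Qed.

Lemma ring_ideal_sum (I : Type) (r : seq I) (P : pred I) (F : I -> R) :
  (forall i, P i -> F i \in J) -> \sum_(i <- r | P i) F i \in J.
Proof.
by apply: (big_ind (fun x => x \in J)); [exact: ring_ideal0 | exact: ring_idealD].
Qed.

End Ideal.

Section LeftLocalUnits.
Variables (R : pzRingType) (J : {pred R}).
Hypotheses (regR : regular_ring R) (idealJ : ring_ideal J).
Variable P : R.
Hypothesis PP : P * P = P.

Lemma corner_idem_extl e x : corner_idem J P e -> x \in J -> P * x = x ->
  exists g, [/\ corner_idem J P g, g * e = e, e * g = e & g * x = x].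
Proof.
move=> [eJ ee Pe eP] xJ Px.
(* e x1 = 0 for x1 = x - e x; by regularity x1 = x1 y1 x1, so p = x1 y1 P is an
   idempotent of J in the corner with p x1 = x1 and e p = 0.  Then q = p - p e
   is an idempotent orthogonal to e, and g = e + q works. *)
set x1 := x - e * x.
have x1J : x1 \in J by rewrite /x1 ring_idealB ?ring_idealMl.
have Px1 : P * x1 = x1 by rewrite /x1 mulrBr Px mulrA Pe.
have ex1 : e * x1 = 0 by rewrite /x1 mulrBr mulrA ee subrr.
have [y1 x1y1x1] := regR x1.
set p := x1 * y1 * P.
have pJ : p \in J by rewrite /p ring_idealMr ?ring_idealMr.
have px1 : p * x1 = x1 by rewrite /p -mulrA Px1.
have pp : p * p = p by rewrite /p -!mulrA (mulrA P) Px1 !mulrA x1y1x1.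
have ep : e * p = 0 by rewrite /p !mulrA ex1 !mul0r.
have Pp : P * p = p by rewrite /p !mulrA Px1.
have pP : p * P = p by rewrite /p -mulrA PP.
clearbody p.
set q := p - p * e.
have qJ : q \in J by rewrite /q ring_idealB ?ring_idealMl.
have qe : q * e = 0 by rewrite /q mulrBl -mulrA ee subrr.
have eq0 : e * q = 0 by rewrite /q mulrBr ep mulrA ep mul0r subrr.
have qq : q * q = q by rewrite {1}/q mulrBl -mulrA eq0 mulr0 subr0 /q mulrBr mulrA pp.
have qx : q * x = x1 by rewrite /q mulrBl -mulrA -mulrBr px1.
have Pq : P * q = q by rewrite /q mulrBr mulrA Pp.
have qP : q * P = q by rewrite /q mulrBl -mulrA eP pP.
clearbody q.
exists (e + q); split.
- split; first exact: ring_idealD.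
  + by rewrite mulrDl !mulrDr ee eq0 qe qq addr0 add0r.
  + by rewrite mulrDr Pe Pq.
  + by rewrite mulrDl eP qP.
- by rewrite mulrDl ee qe addr0.
- by rewrite mulrDr ee eq0 addr0.
- by rewrite mulrDl qx /x1 addrC subrK.
Qed.

Lemma local_unitl e (X : seq R) : corner_idem J P e ->
  (forall x, x \in X -> x \in J /\ P * x = x) ->
  exists g, [/\ corner_idem J P g, g * e = e, e * g = e &
                forall x, x \in X -> g * x = x].
Proof.
move=> eP; elim: X => [|x X IH] HX.
  by exists e; case: (eP) => _ ee _ _; split.
have [|g [gP ge eg gX]] := IH.
  by move=> y yX; apply: HX; rewrite inE yX orbT.
have [xJ Px] := HX x (mem_head _ _).
have [g' [g'P g'g gg' g'x]] := corner_idem_extl gP xJ Px.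
exists g'; split.
- exact: g'P.
- by rewrite -ge mulrA g'g.
- by rewrite -eg -mulrA gg'.
- by move=> y; rewrite inE => /predU1P [-> //|yX]; rewrite -(gX y yX) mulrA g'g.
Qed.

End LeftLocalUnits.

Section LocalUnits.
Variables (R : pzRingType) (J : {pred R}).
Hypotheses (regR : regular_ring R) (idealJ : ring_ideal J).
Variable P : R.
Hypothesis PP : P * P = P.

Lemma local_unitr e (X : seq R) : corner_idem J P e ->
  (forall x, x \in X -> x \in J /\ x * P = x) ->
  exists g, [/\ corner_idem J P g, g * e = e, e * g = e &
                forall x, x \in X -> x * g = x].
Proof.
move=> [eJ ee Pe eP] HX.
have [|g [[gJ gg Pg gP] ge eg gX]] :=
  @local_unitl R^c J (regular_ring_c regR) (ring_ideal_c idealJ) P PP e X _ HX.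
  by split.
by exists g; split.
Qed.

Lemma local_unit (L Rr : seq R) :
  (forall x, x \in L -> x \in J /\ P * x = x) ->
  (forall x, x \in Rr -> x \in J /\ x * P = x) ->
  exists g, [/\ corner_idem J P g, forall x, x \in L -> g * x = x &
                forall x, x \in Rr -> x * g = x].
Proof.
move=> HL HR.
have P0 : corner_idem J P 0 by split; rewrite ?ring_ideal0 ?mulr0 ?mul0r.
have [g1 [g1P _ _ g1L]] := local_unitl regR idealJ PP P0 HL.
have [g [gP gg1 _ gR]] := local_unitr g1P HR.
by exists g; split=> // x /g1L g1x; rewrite -g1x mulrA gg1.
Qed.

End LocalUnits.

Lemma sum_delta_nat (K : pzSemiRingType) (m j : nat) (x : K) :
  \sum_(z < m) ((z == j :> nat)%:R * x) = (j < m)%N%:R * x.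
Proof.
case: (ltnP j m) => [jm|mj].
  rewrite (bigD1 (Ordinal jm)) //= eqxx big1 ?addr0 // => z.
  by rewrite -val_eqE /= => /negbTE ->; rewrite mul0r.
rewrite big1 ?mul0r // => z _.
by rewrite ltn_eqF ?mul0r // (leq_trans (ltn_ord z) mj).
Qed.

Section MatrixUnits.
Variables (K : fieldType) (R : algType K) (k : nat) (n : 'I_k -> nat).
Variable f : (forall l : 'I_k, 'M[K]_(n l)) -> R.
Hypothesis fD : forall A B, f (fun l => A l + B l) = f A + f B.
Hypothesis fZ : forall (a : K) A, f (fun l => a *: A l) = a *: f A.
Hypothesis fM : forall A B, f (fun l => A l *m B l) = f A * f B.

(* Indices are [nat]s so that units of different blocks share a type; a unit
   with an index out of range is [0]. *)
Definition munit (l : 'I_k) (i j : nat) : forall l', 'M[K]_(n l') :=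
  fun l' => \matrix_(a, b) ((l == l') && (a == i :> nat) && (b == j :> nat))%:R.

Definition tunit l i j := f (munit l i j).

Lemma munit_mul l i j l2 a b l' :
  munit l i j l' *m munit l2 a b l' =
  ((l == l2) && (j == a) && (j < n l)%N)%:R *: munit l i b l'.
Proof.
apply/matrixP => x y; rewrite !mxE.
under eq_bigr => z _ do rewrite !mxE.
case: (eqVneq l l') => [->|nl]; last first.
  by rewrite big1 ?mulr0 // => z _; rewrite mul0r.
case: (eqVneq (x : nat) i) => [xi|nxi]; last first.
  by rewrite big1 ?(negbTE nxi) ?andbF ?mulr0 // => z _; rewrite mul0r.
rewrite (eq_bigr (fun z : 'I_(n l') =>
    (z == j :> nat)%:R * ((l2 == l') && (j == a) && (y == b :> nat))%:R)); last first.
  by move=> z _; case: (eqVneq (z : nat) j) => [->|]; rewrite ?mul0r.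
rewrite sum_delta_nat -!natrM [l2 == l']eq_sym.
by case: (l' == l2); case: (j == a); case: (j < n l')%N; case: (y == b :> nat).
Qed.

Lemma f0 : f (fun _ => 0) = 0.
Proof.
have := fD (fun _ => 0) (fun _ => 0).
rewrite (_ : (fun l => 0 + 0) = fun _ => 0); last first.
  by apply: functional_extensionality_dep => l; rewrite addr0.
by move/(congr1 (fun z => z - f (fun _ => 0))); rewrite addrK subrr.
Qed.

Lemma f_sum (I : Type) (r : seq I) (P : pred I) (F : I -> forall l, 'M[K]_(n l)) :
  f (fun l => \sum_(x <- r | P x) F x l) = \sum_(x <- r | P x) f (F x).
Proof.
elim: r => [|x r IH].
  rewrite big_nil -f0; congr f; apply: functional_extensionality_dep => l.
  by rewrite big_nil.
rewrite big_cons -IH; case Px: (P x).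
  rewrite -fD; congr f; apply: functional_extensionality_dep => l.
  by rewrite big_cons Px.
by congr f; apply: functional_extensionality_dep => l; rewrite big_cons Px.
Qed.

Lemma tunit_mul l i j l2 a b :
  tunit l i j * tunit l2 a b =
  if (l == l2) && (j == a) && (j < n l)%N then tunit l i b else 0.
Proof.
rewrite /tunit -fM.
under [fun l' => _]functional_extensionality_dep => l' do rewrite munit_mul.
by rewrite fZ; case: ifP; rewrite ?scale1r ?scale0r.
Qed.

Lemma f_expand A :
  f A = \sum_(l < k) \sum_(i < n l) \sum_(j < n l) A l i j *: tunit l i j.
Proof.
transitivity (f (fun l' =>
    \sum_(l < k) \sum_(i < n l) \sum_(j < n l) A l i j *: munit l i j l')).
  congr f; apply: functional_extensionality_dep => l'.
  apply/matrixP => x y; rewrite summxE.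
  under eq_bigr => l _ do (rewrite summxE; under eq_bigr => i _ do rewrite summxE).
  rewrite (bigD1 l') //= [X in _ + X]big1 ?addr0; last first.
    move=> l nl; apply: big1 => i _; apply: big1 => j _.
    by rewrite !mxE (negbTE nl) mulr0.
  rewrite (bigD1 x) //= [X in _ + X]big1 ?addr0; last first.
    move=> i ni; apply: big1 => j _.
    by rewrite !mxE eqxx val_eqE eq_sym (negbTE ni) mulr0.
  rewrite (bigD1 y) //= [X in _ + X]big1 ?addr0; last first.
    by move=> j nj; rewrite !mxE eqxx !val_eqE !eqxx eq_sym (negbTE nj) mulr0.
  by rewrite !mxE !eqxx mulr1.
do 3 (rewrite f_sum; apply: eq_bigr => ? _).
by rewrite fZ.
Qed.

Lemma sum_block_delta (l : 'I_k) (i : nat) (X : 'I_k -> nat -> R) : (i < n l)%N ->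
  \sum_(l2 < k) \sum_(a < n l2) (if (l2 == l) && (a == i :> nat) then X l2 a else 0)
  = X l i.
Proof.
move=> il; rewrite (bigD1 l) //= [X in _ + X]big1 ?addr0; last first.
  by move=> l2 /negbTE nl; apply: big1 => a _; rewrite nl.
rewrite (bigD1 (Ordinal il)) //= !eqxx /= [X in _ + X]big1 ?addr0 //.
by move=> a; rewrite -val_eqE /= => /negbTE ->.
Qed.

Definition tone := \sum_(l < k) \sum_(i < n l) tunit l i i.

Lemma tone_mul_tunit l i j : (i < n l)%N -> tone * tunit l i j = tunit l i j.
Proof.
move=> il; rewrite mulr_suml -[RHS](sum_block_delta (fun l2 a => tunit l2 a j) il).
apply: eq_bigr => l2 _; rewrite mulr_suml; apply: eq_bigr => a _.
by rewrite tunit_mul ltn_ord andbT.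
Qed.

Lemma tunit_mul_tone l i j : (j < n l)%N -> tunit l i j * tone = tunit l i j.
Proof.
move=> jl; rewrite mulr_sumr -[RHS](sum_block_delta (fun l2 a => tunit l i a) jl).
apply: eq_bigr => l2 _; rewrite mulr_sumr; apply: eq_bigr => a _.
rewrite tunit_mul jl andbT [l2 == l]eq_sym [a == j :> nat]eq_sym.
by case: ifP => // /andP [/eqP -> /eqP ->].
Qed.

Lemma tone_idem : tone * tone = tone.
Proof.
rewrite {1}/tone mulr_suml; apply: eq_bigr => l _.
by rewrite mulr_suml; apply: eq_bigr => i _; rewrite tunit_mul_tone.
Qed.

(* With [c l] in the corner of [tunit l 0 0], [spread c] is the block diagonal
   element (+)_l [c l] (x) [1_(n l)]. *)
Definition spread (c : 'I_k -> R) :=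
  \sum_(l < k) \sum_(a < n l) tunit l a 0 * c l * tunit l 0 a.

Lemma tunit_mul_spread c l i j :
  (j < n l)%N -> tunit l i j * spread c = tunit l i 0 * c l * tunit l 0 j.
Proof.
move=> jl; rewrite mulr_sumr.
rewrite -[RHS](sum_block_delta (fun l2 a => tunit l i 0 * c l2 * tunit l2 0 a) jl).
apply: eq_bigr => l2 _; rewrite mulr_sumr; apply: eq_bigr => a _.
rewrite !mulrA tunit_mul jl andbT [l2 == l]eq_sym [a == j :> nat]eq_sym.
by case: ifP; rewrite ?mul0r.
Qed.

Lemma spread_mul_tunit c l i j :
  (i < n l)%N -> spread c * tunit l i j = tunit l i 0 * c l * tunit l 0 j.
Proof.
move=> il; rewrite mulr_suml.
rewrite -[RHS](sum_block_delta (fun l2 a => tunit l2 a 0 * c l2 * tunit l2 0 j) il).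
apply: eq_bigr => l2 _; rewrite mulr_suml; apply: eq_bigr => a _.
by rewrite -mulrA tunit_mul ltn_ord andbT; case: ifP; rewrite ?mulr0 ?mulrA.
Qed.

Hypothesis n_gt0 : forall l, (0 < n l)%N.

Lemma spread_idem c : (forall l, tunit l 0 0 * c l = c l) ->
  (forall l, c l * c l = c l) -> spread c * spread c = spread c.
Proof.
move=> corner_c idem_c; rewrite {1}/spread mulr_suml; apply: eq_bigr => l _.
rewrite mulr_suml; apply: eq_bigr => a _.
by rewrite -mulrA tunit_mul_spread // corner_c -!mulrA (mulrA (c l)) idem_c.
Qed.

Section Complement.
Variable c0 : R.
Hypotheses (c0_compl : c0 * (1 - tone) = c0) (compl_c0 : (1 - tone) * c0 = c0).

Lemma compl_mul_tunit l i j : (i < n l)%N -> c0 * tunit l i j = 0.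
Proof.
by move=> il; rewrite -c0_compl -mulrA mulrBl mul1r tone_mul_tunit // subrr mulr0.
Qed.

Lemma tunit_mul_compl l i j : (j < n l)%N -> tunit l i j * c0 = 0.
Proof.
by move=> jl; rewrite -compl_c0 mulrA mulrBr mulr1 tunit_mul_tone // subrr mul0r.
Qed.

Lemma compl_mul_spread c : c0 * spread c = 0.
Proof.
rewrite /spread mulr_sumr big1 // => l _; rewrite mulr_sumr big1 // => a _.
by rewrite !mulrA compl_mul_tunit // !mul0r.
Qed.

Lemma spread_mul_compl c : spread c * c0 = 0.
Proof.
rewrite /spread mulr_suml big1 // => l _; rewrite mulr_suml big1 // => a _.
by rewrite -mulrA tunit_mul_compl // mulr0.
Qed.

Lemma compl_spread_idem c : c0 * c0 = c0 ->
  (forall l, tunit l 0 0 * c l = c l) -> (forall l, c l * c l = c l) ->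
  (c0 + spread c) * (c0 + spread c) = c0 + spread c.
Proof.
move=> c0c0 corner_c idem_c.
rewrite mulrDl !mulrDr c0c0 compl_mul_spread spread_mul_compl spread_idem //.
by rewrite addr0 add0r.
Qed.

Lemma compl_spread_comm_tunit c l i j : (i < n l)%N -> (j < n l)%N ->
  (c0 + spread c) * tunit l i j = tunit l i j * (c0 + spread c).
Proof.
move=> il jl; rewrite mulrDl mulrDr compl_mul_tunit // tunit_mul_compl //.
by rewrite spread_mul_tunit // tunit_mul_spread.
Qed.

Lemma compl_spread_comm c A : (c0 + spread c) * f A = f A * (c0 + spread c).
Proof.
rewrite f_expand mulr_sumr mulr_suml; apply: eq_bigr => l _.
rewrite mulr_sumr mulr_suml; apply: eq_bigr => i _.
rewrite mulr_sumr mulr_suml; apply: eq_bigr => j _.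
by rewrite -scalerAr -scalerAl compl_spread_comm_tunit.
Qed.

End Complement.

Variable J : {pred R}.
Hypotheses (regR : regular_ring R) (idealJ : ring_ideal J).
Variable Y : seq R.
Hypothesis YJ : {subset Y <= J}.

Lemma block_local_unit l : exists c, [/\ corner_idem J (tunit l 0 0) c,
  forall (a : 'I_(n l)) y, y \in Y -> c * (tunit l 0 a * y) = tunit l 0 a * y &
  forall (a : 'I_(n l)) y, y \in Y -> y * tunit l a 0 * c = y * tunit l a 0].
Proof.
have u00 : tunit l 0 0 * tunit l 0 0 = tunit l 0 0 by rewrite tunit_mul !eqxx n_gt0.
have HL x : x \in [seq tunit l 0 a * y | a : 'I_(n l) <- enum 'I_(n l), y : R <- Y] ->
    x \in J /\ tunit l 0 0 * x = x.
  case/allpairsP => -[a y] [/= _ yY ->]; split; first by rewrite ring_idealMl ?YJ.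
  by rewrite mulrA tunit_mul !eqxx n_gt0.
have HR x : x \in [seq y * tunit l a 0 | a : 'I_(n l) <- enum 'I_(n l), y : R <- Y] ->
    x \in J /\ x * tunit l 0 0 = x.
  case/allpairsP => -[a y] [/= _ yY ->]; split; first by rewrite ring_idealMr ?YJ.
  by rewrite -mulrA tunit_mul !eqxx n_gt0.
have [g [gP gL gR]] := local_unit regR idealJ u00 HL HR.
by exists g; split=> // a y yY; [apply: gL | apply: gR];
  apply/allpairsP; exists (a, y); rewrite mem_enum.
Qed.

Lemma compl_local_unit : exists c0, [/\ corner_idem J (1 - tone) c0,
  forall y, y \in Y -> c0 * ((1 - tone) * y) = (1 - tone) * y &
  forall y, y \in Y -> y * (1 - tone) * c0 = y * (1 - tone)].
Proof.
have compl_idem : (1 - tone) * (1 - tone) = 1 - tone.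
  by rewrite mulrBl mul1r mulrBr mulr1 tone_idem subrr subr0.
have HL x : x \in [seq (1 - tone) * y | y <- Y] -> x \in J /\ (1 - tone) * x = x.
  by case/mapP => y yY ->; rewrite ring_idealMl ?YJ // mulrA compl_idem.
have HR x : x \in [seq y * (1 - tone) | y <- Y] -> x \in J /\ x * (1 - tone) = x.
  by case/mapP => y yY ->; rewrite ring_idealMr ?YJ // -mulrA compl_idem.
have [c0 [c0P c0L c0R]] := local_unit regR idealJ compl_idem HL HR.
by exists c0; split=> // y yY; [apply: c0L | apply: c0R]; apply: map_f.
Qed.

Lemma spread_mem c : (forall l, c l \in J) -> spread c \in J.
Proof.
move=> cJ; apply: ring_ideal_sum => // l _; apply: ring_ideal_sum => // a _.
by rewrite ring_idealMr ?ring_idealMl.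
Qed.

Lemma spread_mull c y :
  (forall l (a : 'I_(n l)), c l * (tunit l 0 a * y) = tunit l 0 a * y) ->
  spread c * y = tone * y.
Proof.
move=> cy; rewrite /spread /tone !mulr_suml; apply: eq_bigr => l _.
rewrite !mulr_suml; apply: eq_bigr => a _.
by rewrite -!mulrA cy mulrA tunit_mul !eqxx n_gt0.
Qed.

Lemma spread_mulr c y :
  (forall l (a : 'I_(n l)), y * tunit l a 0 * c l = y * tunit l a 0) ->
  y * spread c = y * tone.
Proof.
move=> yc; rewrite /spread /tone !mulr_sumr; apply: eq_bigr => l _.
rewrite !mulr_sumr; apply: eq_bigr => a _.
by rewrite !mulrA yc -mulrA tunit_mul !eqxx n_gt0.
Qed.

Lemma commuting_local_unit : exists e, [/\ e \in J, e * e = e,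
  forall y, y \in Y -> e * y * e = y & forall A, e * f A = f A * e].
Proof.
have [c Hc] := fin_all_exists block_local_unit.
have cP l : corner_idem J (tunit l 0 0) (c l) by case: (Hc l).
have [c0 [[c0J c0c0 compl_c0 c0_compl] c0L c0R]] := compl_local_unit.
exists (c0 + spread c); split.
- by rewrite ring_idealD // spread_mem // => l; case: (cP l).
- by apply: compl_spread_idem => // l; case: (cP l).
- move=> y yY.
  have ey : (c0 + spread c) * y = y.
    rewrite mulrDl (spread_mull (y := y)) => [|l a]; last by case: (Hc l) => _ -> .
    by rewrite -c0_compl -mulrA c0L // -mulrDl subrK mul1r.
  have ye : y * (c0 + spread c) = y.
    rewrite mulrDr (spread_mulr (y := y)) => [|l a]; last by case: (Hc l) => _ _ -> .
    by rewrite -compl_c0 mulrA c0R // -mulrDr subrK mulr1.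
  by rewrite ey ye.
- exact: compl_spread_comm.
Qed.

End MatrixUnits.

Lemma ring_ideal_is_ideal (K : fieldType) (R : algType K) (J : {pred R}) :
  is_ideal J -> ring_ideal J.
Proof.
case=> J0 JD JZ JM; split=> // x y xJ yJ.
by rewrite -scaleN1r JD ?JZ.
Qed.

Theorem proposition3p3 (K : fieldType) (R : algType K) (J T : {pred R}) :
  regular_ring R ->
  is_ideal J ->
  matricial_subalgebra T ->
  direct_sum_decomp T J ->
  forall Y : seq R, {subset Y <= J} ->
  exists e : R,
    [/\ e \in J, e * e = e,
        (forall y, y \in Y -> exists j, j \in J /\ y = e * j * e) &
        (forall t, t \in T -> e * t = t * e)].
Proof.
move=> regR /ring_ideal_is_ideal idealJ [k [n [f [n_gt0 [fD [fZ [fM [_ memT]]]]]]]] _.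
move=> Y YJ.
have [e [eJ ee eYe eT]] := commuting_local_unit fD fZ fM n_gt0 regR idealJ YJ.
exists e; split=> //.
- by move=> y yY; exists y; rewrite eYe ?YJ.
- by move=> t /memT [A <-].
Qed.
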